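(* Let $C\colon y^2=f(x)$ be a hyperelliptic curve over $K$ with $f(x)\in\mathcal O_K[x]$. If $d_{\mathcal R}=0$, $v(c_f)=0$ and there is no cluster $\mathfrak s\neq\mathcal R$ with $|\mathfrak s|>g+1$, then $y^2=f(x)$ is a minimal Weierstrass equation for $C$.
   Context: $K$ is a non-archimedean local field with ring of integers $\mathcal O_K$, finite residue field of characteristic $p\ne2$, valuation $v$ on $\bar K$ normalised on $K$. $f$ is separable of degree $2g+1$ or $2g+2$, $g\ge2$ the genus, with leading coefficient $c_f$ and roots $\mathcal R$. Clusters: non-empty $D\cap\mathcal R$ for discs $D=\{x\in\bar K:v(x-z)\ge d\}$; $d_{\mathcal R}=\min_{r,r'\in\mathcal R}v(r-r')$. The discriminant of $y^2=h(x)$ is $16^gc_h^{4g+2}\mathrm{disc}(h/c_h)$; an integral Weierstrass equation for $C$ is a $K$-isomorphic model $y^2=h(x)$, $h\in\mathcal O_K[x]$, and it is minimal if its discriminant has minimal valuation among all integral Weierstrass equations for $C$. *)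

From HB Require Import structures.
From mathcomp Require Import all_boot all_order all_algebra.
From mathcomp Require Import separable.
Set Implicit Arguments. Unset Strict Implicit. Unset Printing Implicit Defensive.
Import Order.TTheory GRing.Theory Num.Theory.
Local Open Scope ring_scope.

(* Setting: K a field, L an algebraically closed field with an embedding
   iota : K -> L (playing the role of \bar K; only the algebraic closure of
   iota(K) inside L ever matters), and v : L -> rat a valuation on L
   (its value at 0 is irrelevant: all axioms and uses concern nonzero
   arguments, v(0) = +oo by convention). *)

Section Defs.
Variables (K : fieldType) (L : closedFieldType) (iota : {rmorphism K -> L}).
Variable (v : L -> rat).

Definition vK (a : K) : rat := v (iota a).

Definition is_valuation : Prop :=
  (forall x y : L, x != 0 -> y != 0 -> v (x * y) = v x + v y) /\
  (forall x y : L, x != 0 -> y != 0 -> x + y != 0 ->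
      Num.min (v x) (v y) <= v (x + y)).

Definition intK (a : K) : bool := (a == 0) || (0 <= vK a).

Definition vK_cauchy (u : nat -> K) : Prop :=
  forall N : int, exists n0 : nat, forall m n : nat, (n0 <= m)%N -> (n0 <= n)%N ->
    u m = u n \/ N%:~R <= vK (u m - u n).
Definition vK_converges (u : nat -> K) (l : K) : Prop :=
  forall N : int, exists n0 : nat, forall n : nat, (n0 <= n)%N ->
    u n = l \/ N%:~R <= vK (u n - l).

(* K is a non-archimedean local field with valuation v normalised on K
   (discrete, with value group exactly Z), complete, with finite residue
   field O_K / m_K of characteristic different from 2; v on L extends it
   (the extension to the algebraic closure is then the unique one). *)
Definition nonarch_local_field_odd_residue : Prop :=
  is_valuation /\ [/\ 
      (forall a : K, a != 0 -> vK a \is a Num.int),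
      (exists pi : K, pi != 0 /\ vK pi = 1),
      (forall u : nat -> K, vK_cauchy u -> exists l, vK_converges u l),
      (exists s : seq K, all intK s /\
          (forall a : K, intK a ->
            exists b, b \in s /\ ((a - b == 0) || (0 < vK (a - b))))) &
      ((2 : K) != 0 /\ vK 2 = 0) ].

Definition intK_poly (h : {poly K}) : Prop := forall i : nat, intK h`_i.

Definition roots_of (h : {poly K}) (rs : seq L) : Prop :=
  map_poly iota h = (iota (lead_coef h)) *: \prod_(r <- rs) ('X - r%:P).

Definition weq_disc (g : nat) (h : {poly K}) (rs : seq L) : L :=
  iota ((16 : K) ^+ g * (lead_coef h) ^+ (4 * g + 2)) *
  \prod_(i < size rs) \prod_(j < size rs | (i < j)%N) (rs`_i - rs`_j) ^+ 2.

Definition in_disc (z : L) (d : rat) (x : L) : bool := (x == z) || (d <= v (x - z)).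

Definition disc_cluster (rs : seq L) (z : L) (d : rat) : seq L :=
  [seq r <- rs | in_disc z d r].

Definition depth_R_eq (rs : seq L) (dR : rat) : Prop :=
  (exists r r', [/\ r \in rs, r' \in rs, r != r' & v (r - r') = dR]) /\
  (forall r r', r \in rs -> r' \in rs -> r != r' -> dR <= v (r - r')).

(* the model y^2 = e^2 (cx+d)^(2g+2) f((ax+b)/(cx+d)) *)
Definition weq_transform (g : nat) (f : {poly K}) (a b c d e : K) : {poly K} :=
  (e ^+ 2) *: \sum_(i < (2 * g + 3)%N)
     f`_i *: (('X * a%:P + b%:P) ^+ i * ('X * c%:P + d%:P) ^+ (2 * g + 2 - i)).

(* y^2 = h(x) is an integral Weierstrass equation for C : y^2 = f(x):
   h in O_K[x] and h is K-isomorphic to C via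
   (x, y) |-> ((ax+b)/(cx+d), e y/(cx+d)^(g+1)), ad - bc != 0, e != 0 *)
Definition integral_weq_for (g : nat) (f h : {poly K}) : Prop :=
  intK_poly h /\
  exists a b c d e : K, [/\ a * d - b * c != 0, e != 0 &
                          h = weq_transform g f a b c d e].

Definition minimal_weq (g : nat) (f : {poly K}) : Prop :=
  intK_poly f /\
  forall (h : {poly K}) (rf rh : seq L),
    integral_weq_for g f h -> roots_of f rf -> roots_of h rh ->
    v (weq_disc g f rf) <= v (weq_disc g h rh).

End Defs.

(* Write the binary form of degree 2g + 2 attached to f as c_f times the
   product of the linear forms of its 2g + 2 branch points (the roots of f,
   plus infinity when deg f is odd). A change of model
   (x, y) |-> ((ax + b)/(cx + d), e y/(cx + d)^(g+1)) moves the branch points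
   by a matrix of determinant D = ad - bc and scales the form by e^2; computing
   discriminants as products of det(x_i, x_j)^2 gives
     v(disc h) - v(disc f) = (4g + 2) (2 v(e) + (g + 1) v(D)).
   By Gauss's lemma the content of h is 2 v(e) + sum_i mu(x_i'), where mu(x')
   is the least valuation of a coordinate of the image x' of a branch point x,
   so integrality of h gives 2 v(e) + sum_i mu(x_i') >= 0. On the other hand
   mu(x') + mu(y') <= v(det(x', y')) = v(D) + v(det(x, y)) <= v(D) whenever x
   and y have different reductions. Since d_R = 0 and no proper cluster has
   more than g + 1 roots, every branch point shares its reduction with at most
   g + 1 of the 2g + 2 branch points, and pairing a maximiser of mu with the
   points far from it yields sum_i mu(x_i') <= (g + 1) v(D). *)

From HB Require Import structures.
From mathcomp Require Import all_boot all_order all_algebra.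
From mathcomp Require Import separable.
From mathcomp Require Import ring lra zify.
Import Order.TTheory GRing.Theory Num.Theory.
Set Implicit Arguments. Unset Strict Implicit. Unset Printing Implicit Defensive.
Local Open Scope ring_scope.

Lemma prodr_const_seq (R : comPzSemiRingType) (I : Type) (r : seq I) (c : R) :
  \prod_(i <- r) c = c ^+ size r.
Proof. by rewrite big_const_seq count_predT iter_mulr_1. Qed.

Section BinaryDiscriminant.
Variable L : fieldType.
Implicit Types (x y : L * L) (s t : seq (L * L)).

Definition wedge x y : L := x.1 * y.2 - y.1 * x.2.

Fixpoint bdisc s : L :=
  if s is x :: s' then (\prod_(y <- s') wedge x y ^+ 2) * bdisc s' else 1.

(* A pair [x] stands for the linear form [x.1 X + x.2 Z], i.e. for the point
   [(- x.2 : x.1)] of the projective line: a root [r] gives [(1, - r)] and the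
   point at infinity gives [(0, 1)]. *)
Definition affine_pt (r : L) : L * L := (1, - r).
Definition infinity_pt : L * L := (0, 1).

Lemma wedge_affine (r s : L) : wedge (affine_pt r) (affine_pt s) = r - s.
Proof. by rewrite /wedge /= !mul1r opprK addrC. Qed.

Lemma wedge_sqrC x y : wedge y x ^+ 2 = wedge x y ^+ 2.
Proof. rewrite /wedge; ring. Qed.

Lemma bdisc_cat_cons s1 x s2 :
  bdisc (s1 ++ x :: s2) = (\prod_(y <- s1 ++ s2) wedge x y ^+ 2) * bdisc (s1 ++ s2).
Proof.
elim: s1 => [|a s1 IH] //=.
rewrite IH !big_cat !big_cons /= wedge_sqrC big_cat /=; ring.
Qed.

Lemma bdisc_perm s t : perm_eq s t -> bdisc s = bdisc t.
Proof.
elim: s t => [|x s IH] t; first by move=> /perm_size /esym /size0nil ->.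
move=> pst; have xt : x \in t by rewrite -(perm_mem pst) mem_head.
case/splitPr: xt pst => t1 t2 pst.
have pst' : perm_eq s (t1 ++ t2).
  by rewrite -(perm_cons x) (perm_trans pst) // -cat1s perm_catCA.
by rewrite bdisc_cat_cons /= (IH _ pst') (perm_big _ pst').
Qed.

Lemma bdisc_scale (c : L * L -> L) s :
  bdisc [seq (c x * x.1, c x * x.2) | x <- s] =
  (\prod_(x <- s) c x) ^+ (2 * (size s).-1) * bdisc s.
Proof.
elim: s => [|x s IH] /=; first by rewrite big_nil expr1n mul1r.
rewrite IH big_map big_cons.
have -> : \prod_(y <- s) wedge (c x * x.1, c x * x.2) (c y * y.1, c y * y.2) ^+ 2
   = c x ^+ (2 * size s) * (\prod_(y <- s) c y) ^+ 2 * \prod_(y <- s) wedge x y ^+ 2.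
  rewrite -prodrXl exprM -prodr_const_seq -!big_split /=.
  by apply: eq_bigr => y _; rewrite /wedge /=; ring.
case: s {IH} => [|y s] /=; first by rewrite !big_nil !expr1n expr0 !mul1r.
have -> : (2 * (size s).+1 = 2 + 2 * size s)%N by lia.
rewrite !exprMn !exprD; ring.
Qed.

Lemma bdisc_neq0 s : pairwise (fun x y => wedge x y != 0) s -> bdisc s != 0.
Proof.
elim: s => [|x s IH] /=; first by rewrite oner_eq0.
case/andP => /allP hx hs; rewrite mulf_neq0 ?IH //.
by rewrite prodf_seq_neq0; apply/allP => y /hx hy; rewrite expf_neq0.
Qed.

Lemma bdisc_affine (r : seq L) :
  \prod_(i < size r) \prod_(j < size r | (i < j)%N) (r`_i - r`_j) ^+ 2 =
  bdisc (map affine_pt r).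
Proof.
elim: r => [|x r IH] /=; first by rewrite big_ord0.
rewrite big_ord_recl /= -IH; congr (_ * _).
  rewrite big_mkcond big_ord_recl /= mul1r big_map (big_nth 0) big_mkord.
  by apply: eq_bigr => j _; rewrite wedge_affine.
apply: eq_bigr => i _.
by rewrite big_mkcond big_ord_recl /= mul1r [in RHS]big_mkcond.
Qed.

Lemma bdisc_infinity_affine m (r : seq L) :
  bdisc (nseq m infinity_pt ++ map affine_pt r) =
  if (m <= 1)%N then bdisc (map affine_pt r) else 0.
Proof.
case: m => [|[|m]] //=.
  rewrite big_map big1 ?mul1r // => a _.
  by rewrite /wedge /= mul0r mul1r sub0r sqrrN expr1n.
by rewrite big_cons /wedge /= mul0r subrr expr0n /= !mul0r.
Qed.

Section Action.
Variables a b c d : L.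

Definition act_pt x : L * L := (a * x.1 + c * x.2, b * x.1 + d * x.2).

Lemma wedge_act x y : wedge (act_pt x) (act_pt y) = (a * d - b * c) * wedge x y.
Proof. rewrite /wedge /act_pt /=; ring. Qed.

Lemma bdisc_act s :
  bdisc (map act_pt s) = (a * d - b * c) ^+ (size s * (size s).-1) * bdisc s.
Proof.
elim: s => [|x s IH] /=; first by rewrite expr0 mul1r.
rewrite IH big_map.
under eq_bigr do rewrite wedge_act exprMn.
rewrite big_split /= prodr_const_seq -exprM.
have -> : ((size s).+1 * size s = size s * 2 + size s * (size s).-1)%N.
  by case: (size s) => [|n] //=; lia.
rewrite exprD mulnC; ring.
Qed.

End Action.
End BinaryDiscriminant.
Arguments affine_pt {L} r.
Arguments infinity_pt {L}.

Section LinearForms.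
Variable L : fieldType.
Implicit Types (x : L * L) (P : seq (L * L)) (p A B : {poly L}).

Definition lform x : {poly L} := 'X * x.1%:P + x.2%:P.

Definition proj_point x : bool := (x.1 != 0) || (x.2 != 0).

Lemma lform_affine (r : L) : lform (affine_pt r) = 'X - r%:P.
Proof. by rewrite /lform /= mulr1 polyCN. Qed.

Lemma lform_infinity : lform infinity_pt = 1 :> {poly L}.
Proof. by rewrite /lform /= mulr0 add0r. Qed.

Lemma size_lform_leq x : (size (lform x) <= 2)%N.
Proof.
have hX : (size ('X * x.1%:P)%R <= 2)%N.
  by rewrite (leq_trans (size_polyMleq _ _)) // size_polyX size_polyC; case: (_ != 0).
by rewrite (leq_trans (size_polyD _ _)) // geq_max hX size_polyC; case: (_ != 0).
Qed.

Lemma size_prod_lform_leq P : (size (\prod_(x <- P) lform x)%R <= (size P).+1)%N.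
Proof.
elim: P => [|x P IH]; first by rewrite big_nil size_poly1.
rewrite big_cons (leq_trans (size_polyMleq _ _)) //.
by move: (size_lform_leq x) IH => /=; lia.
Qed.

Definition pt_scale x : L := if x.1 == 0 then x.2 else x.1.

Definition normalize_pt x : L * L :=
  if x.1 == 0 then infinity_pt else affine_pt (- (x.2 / x.1)).

Lemma pt_scale_neq0 x : proj_point x -> pt_scale x != 0.
Proof. by rewrite /proj_point /pt_scale; case: eqP => // /eqP. Qed.

Lemma normalize_ptE x : proj_point x ->
  normalize_pt x = ((pt_scale x)^-1 * x.1, (pt_scale x)^-1 * x.2).
Proof.
move=> /pt_scale_neq0; rewrite /normalize_pt /pt_scale /infinity_pt /affine_pt.
have [x10 s0|x10 s0] := eqVneq x.1 0; first by rewrite x10 mulr0 mulVf.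
by rewrite mulVf // opprK mulrC.
Qed.

Lemma lform_normalize x : proj_point x -> lform x = pt_scale x *: lform (normalize_pt x).
Proof.
move=> /[dup] /pt_scale_neq0 s0 /normalize_ptE ->.
by rewrite /lform /= scalerDr scalerAr -!mul_polyC -!polyCM !mulrA mulfV // !mul1r.
Qed.

Definition affine_coords P : seq L := [seq - (x.2 / x.1) | x <- P & x.1 != 0].

Lemma prod_lform_normalize P : all proj_point P ->
  \prod_(x <- P) lform x =
  (\prod_(x <- P) pt_scale x) *: \prod_(r <- affine_coords P) ('X - r%:P).
Proof.
move=> hP; rewrite (eq_big_seq (fun x => pt_scale x *: lform (normalize_pt x))); last first.
  by move=> x /(allP hP) /lform_normalize.
rewrite scaler_prod big_map big_filter; congr (_ *: _).
rewrite [RHS]big_mkcond; apply: eq_bigr => x _; rewrite /normalize_pt.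
by case: eqP => _ /=; rewrite ?lform_infinity ?lform_affine.
Qed.

Lemma perm_normalize P :
  perm_eq (map normalize_pt P)
    (nseq (count (fun x => x.1 == 0) P) infinity_pt ++ map affine_pt (affine_coords P)).
Proof.
elim: P => [|x P IH] //=; rewrite /affine_coords /= -/(affine_coords P) {1}/normalize_pt.
case: eqP => _ /=; first by rewrite perm_cons.
by rewrite perm_sym (perm_catCA _ [:: _]) /= perm_cons perm_sym.
Qed.

Lemma bdisc_roots_lform (hL : {poly L}) (cL lam : L) (rh : seq L) P :
  hL = cL *: \prod_(r <- rh) ('X - r%:P) -> hL = lam *: \prod_(x <- P) lform x ->
  lam != 0 -> all proj_point P -> bdisc P != 0 ->
  cL ^+ (2 * (size P).-1) * bdisc (map affine_pt rh) =
  lam ^+ (2 * (size P).-1) * bdisc P.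
Proof.
move=> h1 h2 lam0 hP hdisc; set S := \prod_(x <- P) pt_scale x.
have S0 : S != 0.
  by rewrite prodf_seq_neq0; apply/allP => x /(allP hP) /pt_scale_neq0.
have hfac : hL = (lam * S) *: \prod_(r <- affine_coords P) ('X - r%:P).
  by rewrite h2 prod_lform_normalize // scalerA.
have ecL : cL = lam * S.
  by have := congr1 lead_coef h1; rewrite {1}hfac !lead_coefZ !lead_coef_prod_XsubC !mulr1.
have hperm : perm_eq rh (affine_coords P).
  apply: prod_XsubC_eq; apply: (@scalerI _ _ cL); first by rewrite ecL mulf_neq0.
  by rewrite -h1 hfac ecL.
have hN : bdisc (map normalize_pt P) = S^-1 ^+ (2 * (size P).-1) * bdisc P.
  rewrite -prodfV -bdisc_scale; congr bdisc.
  by apply/eq_in_map => x /(allP hP) /normalize_ptE.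
have hNaff : bdisc (map normalize_pt P) = bdisc (map affine_pt (affine_coords P)).
  move: hN; rewrite (bdisc_perm (perm_normalize P)) bdisc_infinity_affine.
  case: ifP => // _ /eqP; rewrite eq_sym mulf_eq0 (negPf hdisc) orbF.
  by rewrite expf_eq0 invr_eq0 (negPf S0) andbF.
rewrite (bdisc_perm (perm_map affine_pt hperm)) -hNaff hN ecL exprMn -mulrA exprVn.
by rewrite mulVKf // expf_neq0.
Qed.

(* [B ^ N * p (A / B)]: the degree-[N] homogenisation of [p] evaluated at [(A, B)]. *)
Definition homog_subst (N : nat) p A B : {poly L} :=
  \sum_(i < N.+1) p`_i *: (A ^+ i * B ^+ (N - i)).

Lemma homog_substD N p q A B :
  homog_subst N (p + q) A B = homog_subst N p A B + homog_subst N q A B.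
Proof. by rewrite /homog_subst -big_split; apply: eq_bigr => i _; rewrite coefD scalerDl. Qed.

Lemma homog_substZ N c p A B : homog_subst N (c *: p) A B = c *: homog_subst N p A B.
Proof. by rewrite /homog_subst scaler_sumr; apply: eq_bigr => i _; rewrite coefZ scalerA. Qed.

Lemma homog_subst_mulX N p A B :
  homog_subst N.+1 ('X * p) A B = A * homog_subst N p A B.
Proof.
rewrite /homog_subst big_ord_recl coefXM /= scale0r add0r mulr_sumr.
by apply: eq_bigr => i _; rewrite coefXM /bump /= add1n subSS -scalerAr exprS mulrA.
Qed.

Lemma homog_subst_succ N p A B : (size p <= N.+1)%N ->
  homog_subst N.+1 p A B = homog_subst N p A B * B.
Proof.
move=> sp; rewrite /homog_subst big_ord_recr /= (nth_default 0 sp) scale0r addr0.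
rewrite mulr_suml; apply: eq_bigr => i _; rewrite -scalerAl; congr (_ *: _).
have hi : (i <= N)%N by rewrite -ltnS.
by rewrite (subSn hi) exprSr mulrA.
Qed.

Lemma homog_subst_lform_mul N x p A B : (size p <= N.+1)%N ->
  homog_subst N.+1 (lform x * p) A B = (x.1 *: A + x.2 *: B) * homog_subst N p A B.
Proof.
move=> sp; have -> : lform x * p = x.1 *: ('X * p) + x.2 *: p.
  by rewrite /lform -!mul_polyC; ring.
rewrite homog_substD !homog_substZ homog_subst_mulX homog_subst_succ //.
by rewrite mulrDl -!scalerAl [_ * B]mulrC.
Qed.

Lemma homog_subst_prod_lform P A B :
  homog_subst (size P) (\prod_(x <- P) lform x) A B = \prod_(x <- P) (x.1 *: A + x.2 *: B).
Proof.
elim: P => [|x P IH].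
  by rewrite !big_nil /homog_subst big_ord_recl big_ord0 coef1 /= addr0 scale1r mulr1.
by rewrite !big_cons homog_subst_lform_mul ?size_prod_lform_leq // IH.
Qed.

Lemma lform_act (a b c d : L) x :
  x.1 *: ('X * a%:P + b%:P) + x.2 *: ('X * c%:P + d%:P) = lform (act_pt a b c d x).
Proof. by rewrite /lform /act_pt /= -!mul_polyC !(polyCD, polyCM); ring. Qed.

Lemma proj_point_act (a b c d : L) x :
  a * d - b * c != 0 -> proj_point x -> proj_point (act_pt a b c d x).
Proof.
move=> D0; apply: contraLR; rewrite /proj_point /act_pt negb_or !negbK /=.
case/andP => /eqP h1 /eqP h2.
have e1 : (a * d - b * c) * x.1 = d * (a * x.1 + c * x.2) - c * (b * x.1 + d * x.2) by ring.
have e2 : (a * d - b * c) * x.2 = a * (b * x.1 + d * x.2) - b * (a * x.1 + c * x.2) by ring.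
rewrite h1 h2 !mulr0 subr0 in e1 e2.
by move/eqP: e1; move/eqP: e2; rewrite !mulf_eq0 (negPf D0) /= => -> ->.
Qed.

End LinearForms.
Arguments proj_point {L} x.

Section Valuation.
Variables (L : fieldType) (v : L -> rat).
Hypothesis vM : forall x y : L, x != 0 -> y != 0 -> v (x * y) = v x + v y.
Hypothesis vD : forall x y : L, x != 0 -> y != 0 -> x + y != 0 ->
  Num.min (v x) (v y) <= v (x + y).

(* [vge x m] and [vgt x m] read [m <= v x] and [m < v x] with [v 0 = +oo]. *)
Definition vge (x : L) (m : rat) : bool := (x == 0) || (m <= v x).
Definition vgt (x : L) (m : rat) : bool := (x == 0) || (m < v x).

Lemma v1 : v 1 = 0.
Proof. by have := vM (oner_neq0 L) (oner_neq0 L); rewrite mulr1 => h; lra. Qed.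

Lemma vN x : v (- x) = v x.
Proof.
have n1 : (-1 : L) != 0 by rewrite oppr_eq0 oner_eq0.
have vN1 : v (-1) = 0 by have := vM n1 n1; rewrite mulrNN mulr1 v1 => h; lra.
have [->|x0] := eqVneq x 0; first by rewrite oppr0.
by rewrite -mulN1r vM // vN1 add0r.
Qed.

Lemma vX x n : x != 0 -> v (x ^+ n) = n%:R * v x.
Proof.
move=> x0; elim: n => [|n IH]; first by rewrite expr0 v1 mul0r.
by rewrite exprS vM ?expf_neq0 // IH -addn1 natrD; lra.
Qed.

Lemma vge_add x y m : vge x m -> vge y m -> vge (x + y) m.
Proof.
rewrite /vge; have [->|x0] := eqVneq x 0; first by rewrite add0r.
have [->|y0] := eqVneq y 0; first by rewrite addr0 (negPf x0).
have [//|s0] := eqVneq (x + y) 0; move=> /= hx hy.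
by apply: le_trans (vD x0 y0 s0); rewrite le_min hx hy.
Qed.

Lemma vgt_add x y m : vgt x m -> vgt y m -> vgt (x + y) m.
Proof.
rewrite /vgt; have [->|x0] := eqVneq x 0; first by rewrite add0r.
have [->|y0] := eqVneq y 0; first by rewrite addr0 (negPf x0).
have [//|s0] := eqVneq (x + y) 0; move=> /= hx hy.
by apply: lt_le_trans (vD x0 y0 s0); rewrite lt_min hx hy.
Qed.

Lemma vge_mul x y m n : vge x m -> vge y n -> vge (x * y) (m + n).
Proof.
rewrite /vge; have [->|x0] := eqVneq x 0; first by rewrite mul0r eqxx.
have [->|y0] := eqVneq y 0; first by rewrite mulr0 eqxx.
by rewrite mulf_eq0 (negPf x0) (negPf y0) /= vM // => hx hy; lra.
Qed.

Lemma vgt_mul x y m n : vgt x m -> vge y n -> vgt (x * y) (m + n).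
Proof.
rewrite /vge /vgt; have [->|x0] := eqVneq x 0; first by rewrite mul0r eqxx.
have [->|y0] := eqVneq y 0; first by rewrite mulr0 eqxx.
by rewrite mulf_eq0 (negPf x0) (negPf y0) /= vM // => hx hy; lra.
Qed.

Lemma vgeN x m : vge (- x) m = vge x m.
Proof. by rewrite /vge oppr_eq0 vN. Qed.

Lemma vgtN x m : vgt (- x) m = vgt x m.
Proof. by rewrite /vgt oppr_eq0 vN. Qed.

Lemma vge_refl x : vge x (v x).
Proof. by rewrite /vge lexx orbT. Qed.

Lemma vaddr_dominant x y m : x != 0 -> v x = m -> vgt y m ->
  x + y != 0 /\ v (x + y) = m.
Proof.
move=> x0 <-; rewrite /vgt; have [->|y0] /= := eqVneq y 0; first by rewrite addr0.
move=> hy; have s0 : x + y != 0.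
  by apply: contraTneq hy => /(canRL (addKr x)) ->; rewrite addr0 vN ltxx.
split => //; apply/eqP; rewrite eq_le; apply/andP; split; last first.
  by apply: le_trans (vD x0 y0 s0); rewrite le_min lexx (ltW hy).
rewrite leNgt; apply/negP => hs.
have := vD s0 (_ : - y != 0); rewrite oppr_eq0 addrK vN => /(_ y0 x0).
by rewrite ge_min !leNgt hs hy.
Qed.

Definition vpt (x : L * L) : rat :=
  if x.1 == 0 then v x.2 else if x.2 == 0 then v x.1 else Num.min (v x.1) (v x.2).

Lemma vge_vpt1 x : vge x.1 (vpt x).
Proof.
rewrite /vpt /vge; case: (x.1 == 0) => //=.
by case: (x.2 == 0) => //=; rewrite ge_min lexx.
Qed.

Lemma vge_vpt2 x : vge x.2 (vpt x).
Proof.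
rewrite /vpt /vge; case: (x.1 == 0) => /=; first by rewrite lexx orbT.
by case: eqP => [//|_] /=; rewrite ge_min lexx orbT.
Qed.

Lemma vpt_cases x : proj_point x ->
  (x.2 != 0 /\ v x.2 = vpt x) \/ [/\ x.1 != 0, v x.1 = vpt x & vgt x.2 (vpt x)].
Proof.
rewrite /proj_point /vpt; case: eqP => [_|/eqP x1] /=; first by left.
case: eqP => [->|/eqP x2] _; first by right; rewrite /vgt eqxx.
by case: (ltP (v x.1) (v x.2)) => h; [right; rewrite /vgt (negPf x2) h | left].
Qed.

Lemma vpt_wedge x y : wedge x y != 0 -> vpt x + vpt y <= v (wedge x y).
Proof.
move=> w0; suff : vge (wedge x y) (vpt x + vpt y) by rewrite /vge (negPf w0).
rewrite /wedge; apply: vge_add; first exact: vge_mul (vge_vpt1 x) (vge_vpt2 y).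
by rewrite vgeN mulrC; apply: vge_mul (vge_vpt2 x) (vge_vpt1 y).
Qed.

(* [M] is the least valuation of a coefficient of [Q], first attained at [k0];
   keeping track of the first index is what makes the induction in Gauss's
   lemma go through. *)
Definition poly_content (Q : {poly L}) (M : rat) : Prop :=
  (forall k, vge Q`_k M) /\
  exists k0, [/\ Q`_k0 != 0, v Q`_k0 = M & forall k, (k < k0)%N -> vgt Q`_k M].

Lemma poly_content1 : poly_content 1 0.
Proof.
split; first by move=> k; rewrite coef1; case: (k == 0%N); rewrite /vge ?v1 ?lexx ?eqxx ?orbT.
by exists 0%N; split; rewrite ?coef1 ?v1 ?oner_eq0.
Qed.

Lemma poly_contentZ Q M lam : lam != 0 -> poly_content Q M -> poly_content (lam *: Q) (v lam + M).
Proof.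
move=> l0 [hall [k0 [h1 h2 h3]]]; split.
  by move=> k; rewrite coefZ; apply: vge_mul (vge_refl _) (hall k).
exists k0; split; rewrite ?coefZ ?mulf_neq0 ?vM ?h2 //.
by move=> k hk; rewrite coefZ mulrC addrC; apply: vgt_mul (h3 _ hk) (vge_refl _).
Qed.

Lemma coef_lform_mul x (Q : {poly L}) k :
  (lform x * Q)`_k = (if k == 0%N then 0 else x.1 * Q`_k.-1) + x.2 * Q`_k.
Proof.
rewrite /lform mulrDl coefD -mulrA coefXM coefCM; congr (_ + _).
by case: (k == 0%N); rewrite ?coefCM.
Qed.

Lemma poly_content_lform_mul x Q M : proj_point x -> poly_content Q M ->
  poly_content (lform x * Q) (vpt x + M).
Proof.
move=> px [hall [k0 [hk0 hv hlt]]].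
have hlow k : (k <= k0)%N -> vgt (if k == 0%N then 0 else x.1 * Q`_k.-1) (vpt x + M).
  case: eqP => [_|/eqP k00] hk; first by rewrite /vgt eqxx.
  by rewrite mulrC addrC; apply: vgt_mul (vge_vpt1 x); apply: hlt; case: k k00 hk.
split.
  move=> k; rewrite coef_lform_mul; apply: vge_add; last exact: vge_mul (vge_vpt2 x) (hall k).
  by case: eqP => _; [rewrite /vge eqxx | apply: vge_mul (vge_vpt1 x) (hall _)].
case: (vpt_cases px) => [[x2 hx2] | [x1 hx1 hx2]].
- have vx : v (x.2 * Q`_k0) = vpt x + M by rewrite vM // hx2 hv.
  have [s0 vs] := vaddr_dominant (mulf_neq0 x2 hk0) vx (hlow _ (leqnn k0)).
  exists k0; split=> [||k hk]; rewrite coef_lform_mul; [by rewrite addrC | by rewrite addrC |].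
  apply: vgt_add (hlow _ (ltnW hk)) _.
  by rewrite mulrC addrC; apply: vgt_mul (hlt _ hk) (vge_vpt2 x).
- have vx : v (x.1 * Q`_k0) = vpt x + M by rewrite vM // hx1 hv.
  have [s0 vs] := vaddr_dominant (mulf_neq0 x1 hk0) vx (vgt_mul hx2 (hall k0.+1)).
  exists k0.+1; split=> [||k hk]; rewrite coef_lform_mul //.
  by apply: vgt_add (hlow _ hk) (vgt_mul hx2 (hall k)).
Qed.

Lemma poly_content_prod_lform (s : seq (L * L)) (lam : L) : lam != 0 -> all proj_point s ->
  poly_content (lam *: \prod_(x <- s) lform x) (v lam + \sum_(x <- s) vpt x).
Proof.
move=> l0 hs; apply: poly_contentZ => //.
elim: s hs => [|x s IH] /=; first by rewrite !big_nil => _; exact: poly_content1.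
by case/andP=> hx hs; rewrite !big_cons; apply: poly_content_lform_mul => //; exact: IH.
Qed.

End Valuation.

Section PairingBound.
Variables (R : realDomainType) (T : eqType).
Implicit Types (s : seq T) (F : T -> R).

Lemma exists_argmax_seq s F : s != [::] ->
  exists2 x0, x0 \in s & forall y, y \in s -> F y <= F x0.
Proof.
elim: s => [|a s IH] // _.
have [->|/IH [x0 hx0 hmax]] := eqVneq s [::].
  by exists a => [|y]; rewrite ?mem_head // inE => /eqP ->.
have [ha|ha] := leP (F a) (F x0).
  by exists x0 => [|y]; rewrite inE ?hx0 ?orbT // => /orP[/eqP ->|/hmax].
exists a => [|y]; rewrite ?mem_head // inE => /orP[/eqP -> //|/hmax hy].
exact: le_trans hy (ltW ha).
Qed.

Lemma sumr_const_count s (P : pred T) (c : R) :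
  \sum_(y <- s | P y) c = (count P s)%:R * c.
Proof. by rewrite big_const_seq iter_addr_0 mulr_natl. Qed.

(* Compare with a maximiser [x0] of [F]: the terms close to [x0] are at most
   [F x0], the others at most [V - F x0]. *)
Lemma sum_le_pairing s F (close : T -> pred T) (V : R) (m : nat) :
  size s = (2 * m)%N ->
  (forall x, x \in s -> (count (close x) s <= m)%N) ->
  (forall x y, x \in s -> y \in s -> ~~ close x y -> F x + F y <= V) ->
  \sum_(x <- s) F x <= m%:R * V.
Proof.
move=> hs hcount hfar.
have [s0|/(exists_argmax_seq F) [x0 hx0 hmax]] := eqVneq s [::].
  by move: hs; rewrite s0 big_nil => /esym/eqP; rewrite muln_eq0 => /eqP ->; rewrite mul0r.
set M := F x0; set c := count (close x0) s.
have hcm : c%:R <= m%:R :> R by rewrite ler_nat hcount.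
have hm : 0 <= m%:R :> R by rewrite ler0n.
have [hMV|hMV] := leP (2 * M) V.
  have : \sum_(x <- s) F x <= \sum_(x <- s) M.
    by rewrite big_seq [X in _ <= X]big_seq; apply: ler_sum => y /hmax.
  by rewrite sumr_const_count count_predT hs natrM; nra.
have hclose : \sum_(y <- s | close x0 y) F y <= c%:R * M.
  rewrite -sumr_const_count big_seq_cond [X in _ <= X]big_seq_cond.
  by apply: ler_sum => y /andP[/hmax].
have hfar0 :
    \sum_(y <- s | ~~ close x0 y) F y <= (count (predC (close x0)) s)%:R * (V - M).
  rewrite -sumr_const_count big_seq_cond [X in _ <= X]big_seq_cond.
  by apply: ler_sum => y /andP[hy /(hfar x0 y hx0 hy) hxy]; rewrite /M; lra.
have hcC : (count (predC (close x0)) s)%:R = 2 * m%:R - c%:R :> R.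
  have := congr1 (GRing.natmul (1 : R)) (count_predC (close x0) s).
  by rewrite hs natrD natrM -/c; lra.
rewrite (bigID (close x0)) /=; rewrite hcC in hfar0; nra.
Qed.

End PairingBound.

Lemma exists_pos_lbound (R : realDomainType) (s : seq R) : {in s, forall x, 0 < x} ->
  exists2 d, 0 < d & {in s, forall x, d <= x}.
Proof.
elim: s => [|a s IH] hs; first by exists 1.
have [x hx|d d0 hd] := IH; first by apply: hs; rewrite inE hx orbT.
have a0 : 0 < a by apply: hs; rewrite mem_head.
exists (Num.min a d); first by rewrite lt_min a0 d0.
by move=> x; rewrite inE => /orP[/eqP ->|/hd hx]; rewrite ge_min ?lexx ?hx ?orbT.
Qed.

Section BranchPoints.
Variable L : fieldType.
Implicit Types (rs : seq L) (x y : L * L).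

Definition branch_points rs (k : nat) : seq (L * L) :=
  map affine_pt rs ++ nseq k infinity_pt.

Lemma size_branch_points rs k : size (branch_points rs k) = (size rs + k)%N.
Proof. by rewrite size_cat size_map size_nseq. Qed.

Lemma proj_point_branch_points rs k : all proj_point (branch_points rs k).
Proof.
apply/allP => x; rewrite mem_cat mem_nseq.
by case/orP => [/mapP [r _ ->]|/andP [_ /eqP ->]]; rewrite /proj_point /= oner_eq0 ?orbT.
Qed.

Lemma prod_lform_branch_points rs k :
  \prod_(x <- branch_points rs k) lform x = \prod_(r <- rs) ('X - r%:P).
Proof.
rewrite big_cat /= big_map [X in _ * X]big1_seq ?mulr1 => [|x /andP[_]].
  by apply: eq_bigr => r _; rewrite lform_affine.
by rewrite mem_nseq => /andP[_ /eqP ->]; exact: lform_infinity.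
Qed.

Lemma wedge_branch_points rs k x y : x \in branch_points rs k -> y \in branch_points rs k ->
  x != y -> wedge x y != 0.
Proof.
rewrite !mem_cat !mem_nseq.
case/orP => [/mapP [r _ ->]|/andP [_ /eqP ->]];
case/orP => [/mapP [r' _ ->]|/andP [_ /eqP ->]] //=.
- by rewrite wedge_affine subr_eq0; apply: contraNneq => ->.
- by rewrite /wedge /= mul1r mul0r subr0 oner_eq0.
- by rewrite /wedge /= mul0r mul1r sub0r oppr_eq0 oner_eq0.
- by rewrite eqxx.
Qed.

Lemma uniq_branch_points rs k : uniq rs -> (k <= 1)%N -> uniq (branch_points rs k).
Proof.
move=> urs hk; rewrite cat_uniq map_inj_uniq ?urs /=; last by move=> r r' [] /oppr_inj.
apply/andP; split; last by case: k hk => [|[|]].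
apply/hasPn => x; rewrite mem_nseq => /andP[_ /eqP ->].
by apply/mapP => -[r _ []] /eqP; rewrite eq_sym oner_eq0.
Qed.

Lemma bdisc_branch_points_neq0 rs k : uniq rs -> (k <= 1)%N -> bdisc (branch_points rs k) != 0.
Proof.
move=> urs hk; apply: bdisc_neq0.
apply: (@sub_in_pairwise _ [in branch_points rs k] (fun x y => x != y) _ _ _ (allss _)).
  by move=> x y hx hy; apply: (wedge_branch_points hx hy).
by have := uniq_branch_points urs hk; rewrite uniq_pairwise.
Qed.

End BranchPoints.

Section ResidueDiscs.
Variables (L : closedFieldType) (v : L -> rat).
Hypothesis vM : forall x y : L, x != 0 -> y != 0 -> v (x * y) = v x + v y.
Hypothesis vD : forall x y : L, x != 0 -> y != 0 -> x + y != 0 ->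
  Num.min (v x) (v y) <= v (x + y).

(* For points with integral primitive coordinates (such as the branch points
   below) this says that they have the same reduction in the projective line
   over the residue field. *)
Definition residue_close (x y : L * L) : bool := vgt v (wedge x y) 0.

Lemma residue_close_affine (r0 r : L) :
  residue_close (affine_pt r0) (affine_pt r) = vgt v (r - r0) 0.
Proof. by rewrite /residue_close wedge_affine -opprB (vgtN vM). Qed.

Lemma disc_cluster_residue (rs : seq L) (r0 : L) :
  exists2 d, 0 < d & disc_cluster v rs r0 d = [seq r <- rs | vgt v (r - r0) 0].
Proof.
set S := [seq v (r - r0) | r <- rs & (r != r0) && (0 < v (r - r0))].
have [d d0 hd] : exists2 d, 0 < d & {in S, forall x, d <= x}.
  apply: exists_pos_lbound => w /mapP [r].
  by rewrite mem_filter => /andP [/andP [_ h] _] ->.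
exists d => //; apply: eq_in_filter => r hr; rewrite /in_disc /vgt subr_eq0.
have [//|rr0] := eqVneq r r0; apply/idP/idP => /= h; first exact: lt_le_trans d0 h.
by apply: hd; apply/mapP; exists r; rewrite // mem_filter rr0 h.
Qed.

Lemma count_residue_close_roots (rs : seq L) (r0 : L) (g : nat) :
  depth_R_eq v rs 0 ->
  (forall (z : L) (d : rat),
     (g.+1 < size (disc_cluster v rs z d))%N -> disc_cluster v rs z d = rs) ->
  (count (fun r => vgt v (r - r0) 0) rs <= g + 1)%N.
Proof.
move=> [[r [r' [hr hr' rr' vrr']]] _] hclust.
have [d _ hcl] := disc_cluster_residue rs r0.
rewrite leqNgt; apply/negP => hc.
move: (hclust r0 d); rewrite hcl size_filter -addn1 => /(_ hc) /all_filterP /allP hall.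
have : vgt v (r - r') 0.
  have -> : r - r' = (r - r0) - (r' - r0) by rewrite opprB addrA subrK.
  by apply: (vgt_add vD); rewrite ?(vgtN vM); apply: hall.
by rewrite /vgt subr_eq0 (negPf rr') vrr' ltxx.
Qed.

Lemma count_residue_close_branch_points (rs : seq L) (k g : nat) x0 :
  (k <= 1)%N -> depth_R_eq v rs 0 ->
  (forall (z : L) (d : rat),
     (g.+1 < size (disc_cluster v rs z d))%N -> disc_cluster v rs z d = rs) ->
  x0 \in branch_points rs k ->
  (count (residue_close x0) (branch_points rs k) <= g + 1)%N.
Proof.
have v1 := v1 vM.
move=> hk hdep hclust; rewrite count_cat count_map count_nseq mem_cat mem_nseq.
case/orP => [/mapP [r0 _ ->]|/andP [_ /eqP ->]].
  have -> : residue_close (affine_pt r0) infinity_pt = false.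
    by rewrite /residue_close /wedge /vgt /= mulr1 mul0r subr0 oner_eq0 v1 ltxx.
  rewrite mul0n addn0 (eq_count (residue_close_affine r0)).
  exact: count_residue_close_roots hdep hclust.
rewrite (@eq_count _ _ pred0) ?count_pred0 ?add0n => [|r /=]; last first.
  by rewrite /residue_close /wedge /vgt /= mul0r mul1r sub0r oppr_eq0 oner_eq0 vN // v1 ltxx.
by rewrite /residue_close /wedge /vgt /= mul0r subrr eqxx mul1n; lia.
Qed.

Lemma sum_vpt_act_le (a b c d : L) (rs : seq L) (k g : nat) :
  (k <= 1)%N -> (size rs + k = 2 * g + 2)%N -> depth_R_eq v rs 0 ->
  (forall (z : L) (d : rat),
     (g.+1 < size (disc_cluster v rs z d))%N -> disc_cluster v rs z d = rs) ->
  a * d - b * c != 0 ->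
  \sum_(x <- branch_points rs k) vpt v (act_pt a b c d x) <= (g + 1)%:R * v (a * d - b * c).
Proof.
move=> hk hsize hdep hclust D0.
apply: (sum_le_pairing (close := residue_close)).
- by rewrite size_branch_points hsize; lia.
- by move=> x hx; exact: count_residue_close_branch_points hk hdep hclust hx.
move=> x y _ _; rewrite /residue_close /vgt negb_or -leNgt => /andP [w0 hw].
have wa0 : wedge (act_pt a b c d x) (act_pt a b c d y) != 0 by rewrite wedge_act mulf_neq0.
apply: le_trans (vpt_wedge vM vD wa0) _.
by rewrite wedge_act vM // gerDl.
Qed.

End ResidueDiscs.

Lemma disc_gap_ge0 (R : realDomainType) (g : nat) (vl vD S : R) :
  0 <= vl + S -> S <= (g + 1)%:R * vD ->
  0 <= (4 * g + 2)%:R * vl + ((2 * g + 2) * (2 * g + 2).-1)%:R * vD.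
Proof.
move=> hc hS.
have -> : ((2 * g + 2) * (2 * g + 2).-1)%:R = (4 * g + 2)%:R * (g + 1)%:R :> R.
  by rewrite -natrM; congr _%:R; lia.
by rewrite -mulrA -mulrDr mulr_ge0 ?ler0n //; lra.
Qed.

Section WeierstrassModels.
Variables (K : fieldType) (L : closedFieldType) (iota : {rmorphism K -> L}).
Implicit Types (f h : {poly K}) (rs : seq L).

Lemma size_roots_of f rs : f != 0 -> roots_of iota f rs -> size f = (size rs).+1.
Proof.
move=> f0 rootsf; have := congr1 (fun p : {poly L} => size p) rootsf.
by rewrite /= size_map_poly size_scale ?size_prod_XsubC // fmorph_eq0 lead_coef_eq0.
Qed.

Lemma uniq_roots_of f rs : f != 0 -> separable_poly f -> roots_of iota f rs -> uniq rs.
Proof.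
move=> f0; rewrite -(separable_map iota) => + hf; rewrite hf.
by rewrite (eqp_separable (eqp_scale _ _)) ?separable_prod_XsubC // fmorph_eq0 lead_coef_eq0.
Qed.

Lemma map_weq_transform g f (a b c d e : K) :
  map_poly iota (weq_transform g f a b c d e) =
  iota e ^+ 2 *: homog_subst (2 * g + 2) (map_poly iota f)
    ('X * (iota a)%:P + (iota b)%:P) ('X * (iota c)%:P + (iota d)%:P).
Proof.
rewrite /weq_transform map_polyZ rmorphXn rmorph_sum /homog_subst.
have -> : (2 * g + 3 = (2 * g + 2).+1)%N by lia.
congr (_ *: _); apply: eq_bigr => i _; rewrite /= map_polyZ coef_map; congr (_ *: _).
by rewrite rmorphM !rmorphXn !rmorphD !rmorphM /= map_polyX !map_polyC.
Qed.

Lemma map_weq_transform_lform g f (P : seq (L * L)) (a b c d e : K) :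
  map_poly iota f = iota (lead_coef f) *: \prod_(x <- P) lform x ->
  size P = (2 * g + 2)%N ->
  map_poly iota (weq_transform g f a b c d e) =
  (iota e ^+ 2 * iota (lead_coef f)) *:
    \prod_(x <- map (act_pt (iota a) (iota b) (iota c) (iota d)) P) lform x.
Proof.
move=> hf hsize; rewrite map_weq_transform hf -hsize homog_substZ homog_subst_prod_lform.
by rewrite scalerA big_map; congr (_ *: _); apply: eq_bigr => x _; rewrite lform_act.
Qed.

Lemma weq_disc_lform g h rh (lam : L) (P : seq (L * L)) :
  roots_of iota h rh -> map_poly iota h = lam *: \prod_(x <- P) lform x ->
  lam != 0 -> all proj_point P -> bdisc P != 0 -> size P = (2 * g + 2)%N ->
  weq_disc iota g h rh = iota (16 ^+ g) * (lam ^+ (4 * g + 2) * bdisc P).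
Proof.
move=> rootsh hP lam0 hproj hdisc hsize.
have := bdisc_roots_lform rootsh hP lam0 hproj hdisc.
have -> : (2 * (size P).-1 = 4 * g + 2)%N by rewrite hsize; lia.
by rewrite /weq_disc bdisc_affine rmorphM [iota (_ ^+ (4 * g + 2))]rmorphXn -mulrA => ->.
Qed.

Variable v : L -> rat.
Hypothesis vM : forall x y : L, x != 0 -> y != 0 -> v (x * y) = v x + v y.
Hypothesis vD : forall x y : L, x != 0 -> y != 0 -> x + y != 0 ->
  Num.min (v x) (v y) <= v (x + y).

Lemma content_ge0 h (lam : L) (P : seq (L * L)) :
  intK_poly iota v h -> map_poly iota h = lam *: \prod_(x <- P) lform x ->
  lam != 0 -> all proj_point P -> 0 <= v lam + \sum_(x <- P) vpt v x.
Proof.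
move=> inth hP lam0 hproj.
have [_ [k0 [hk0 <- _]]] := poly_content_prod_lform vM vD lam0 hproj.
move: hk0; rewrite -hP coef_map fmorph_eq0 => hk0.
by have := inth k0; rewrite /intK (negPf hk0).
Qed.

Lemma v_weq_disc_lform g h rh (lam : L) (P : seq (L * L)) :
  (2 : K) != 0 ->
  roots_of iota h rh -> map_poly iota h = lam *: \prod_(x <- P) lform x ->
  lam != 0 -> all proj_point P -> bdisc P != 0 -> size P = (2 * g + 2)%N ->
  v (weq_disc iota g h rh) = v (iota (16 ^+ g)) + ((4 * g + 2)%:R * v lam + v (bdisc P)).
Proof.
move=> two0 rootsh hP lam0 hproj hdisc hsize.
have i16 : iota (16 ^+ g) != 0.
  by rewrite fmorph_eq0 expf_neq0 // (_ : 16 = 2 ^+ 4) ?expf_neq0 // -natrX.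
by rewrite (weq_disc_lform rootsh hP) // !vM ?mulf_neq0 ?expf_neq0 // (vX vM).
Qed.

Lemma weq_disc_transform_le g f rf rh (P : seq (L * L)) (a b c d e : K) :
  (2 : K) != 0 -> f != 0 -> v (iota (lead_coef f)) = 0 ->
  map_poly iota f = iota (lead_coef f) *: \prod_(x <- P) lform x ->
  all proj_point P -> bdisc P != 0 -> size P = (2 * g + 2)%N ->
  a * d - b * c != 0 -> e != 0 ->
  \sum_(x <- P) vpt v (act_pt (iota a) (iota b) (iota c) (iota d) x) <=
    (g + 1)%:R * v (iota a * iota d - iota b * iota c) ->
  intK_poly iota v (weq_transform g f a b c d e) ->
  roots_of iota f rf -> roots_of iota (weq_transform g f a b c d e) rh ->
  v (weq_disc iota g f rf) <= v (weq_disc iota g (weq_transform g f a b c d e) rh).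
Proof.
move=> two0 f0 vcf hf hproj hdisc hsize det0 e0 pairing inth rootsf rootsh.
have eh := map_weq_transform_lform a b c d e hf hsize.
set act := act_pt _ _ _ _ in eh pairing; set D := _ - _ in pairing.
have icf0 : iota (lead_coef f) != 0 by rewrite fmorph_eq0 lead_coef_eq0.
have D0 : D != 0 by rewrite /D -!rmorphM -rmorphB fmorph_eq0.
have lam0 : iota e ^+ 2 * iota (lead_coef f) != 0.
  by rewrite mulf_neq0 // expf_neq0 // fmorph_eq0.
have hPact : all proj_point (map act P).
  by rewrite all_map; apply/allP => x /(allP hproj); exact: proj_point_act.
have discP : bdisc (map act P) = D ^+ ((2 * g + 2) * (2 * g + 2).-1) * bdisc P.
  by rewrite bdisc_act hsize.
have content := content_ge0 inth eh lam0 hPact; rewrite big_map in content.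
rewrite (v_weq_disc_lform two0 rootsf hf) // (v_weq_disc_lform two0 rootsh eh) //;
  rewrite ?size_map // discP ?mulf_neq0 ?expf_neq0 //.
rewrite [v (D ^+ _ * _)]vM ?expf_neq0 // (vX vM) // vcf mulr0.
by have := disc_gap_ge0 content pairing; lra.
Qed.

End WeierstrassModels.

Theorem theorem17p1 (K : fieldType) (L : closedFieldType)
  (iota : {rmorphism K -> L}) (v : L -> rat) (g : nat) (f : {poly K}) (rs : seq L) :
  nonarch_local_field_odd_residue iota v ->
  (2 <= g)%N ->
  separable_poly f ->
  (size f = (2 * g + 2)%N \/ size f = (2 * g + 3)%N) ->
  intK_poly iota v f ->
  roots_of iota f rs ->
  depth_R_eq v rs 0 ->
  vK iota v (lead_coef f) = 0 ->
  (forall (z : L) (d : rat),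
     (g.+1 < size (disc_cluster v rs z d))%N -> disc_cluster v rs z d = rs) ->
  minimal_weq iota v g f.
Proof.
move=> [[vM vD] [_ _ _ _ [two0 _]]] _ sep hsz intf rootsf hdep vcf hclust.
have f0 : f != 0 by rewrite -size_poly_gt0; case: hsz => ->; rewrite addn_gt0 orbT.
set k := (2 * g + 3 - size f)%N.
have [hk hsize] : (k <= 1)%N /\ (size rs + k = 2 * g + 2)%N.
  have := size_roots_of f0 rootsf.
  by rewrite /k; case: hsz => ->; lia.
split => // h rf rh [inth [a [b [c [d [e [det0 e0 hdef]]]]]]] rootsf' rootsh; subst h.
apply: (weq_disc_transform_le vM vD (P := branch_points rs k)) => //.
- by rewrite prod_lform_branch_points.
- exact: proj_point_branch_points.
- exact: bdisc_branch_points_neq0 (uniq_roots_of f0 sep rootsf) hk.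
- by rewrite size_branch_points.
apply: sum_vpt_act_le => //.
by rewrite -!rmorphM -rmorphB fmorph_eq0.
Qed.
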